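(* Let $U=[N]$, let $\ell$ be a positive integer dividing $N$, let $\mathcal{S}=\{S_1,\dots,S_m\}$ be a collection of subsets of $U$ each of size $N/\ell$, and let $\varepsilon>0$. Let $I_{\mathrm{rp}}$ be the $k$-RP instance with $k=\ell$, point set $\mathcal{X}=U\cup\mathcal{S}$ (an element point for each $u\in U$ and a set point for each $S\in\mathcal{S}$), distance $d(u,S)=1$ if $u\in S$ and $d(u,S)=2-\varepsilon$ if $u\notin S$ for $u\in U$, $S\in\mathcal{S}$; $d(u_1,u_2)=2$ for distinct $u_1,u_2\in U$; $d(S_1,S_2)=1$ for distinct set points; and $P$ uniform over the element points $U$. If there exist $\ell$ sets in $\mathcal{S}$ whose union is $U$ (a full covering instance), then there exists a $k$-RP solution for $I_{\mathrm{rp}}$ of cost at most $k\cdot(1+1/e)$.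
   Context: For a finite metric space $(\mathcal{X},d)$, $\mathcal{X}_k$ is the set of multisets of exactly $k$ points of $\mathcal{X}$; for $A,B\in\mathcal{X}_k$, $d_k(A,B)$ is the minimum, over perfect matchings between the elements of $A$ and of $B$ (with multiplicity), of the sum of the distances of matched pairs; $P_k$ is the distribution of $k$ points drawn i.i.d. from $P$. A $k$-RP solution is any $K\in\mathcal{X}_k$, and its cost is $\mathbb{E}_{L\sim P_k}[d_k(K,L)]$. *)

From mathcomp Require Import all_boot all_order all_algebra all_fingroup.
From mathcomp Require Import reals sequences.
Set Implicit Arguments. Unset Strict Implicit. Unset Printing Implicit Defensive.
Import Order.TTheory GRing.Theory Num.Theory.
Local Open Scope ring_scope.

(* A multiset of exactly k points of X is represented by a k-indexed family
   (an ordered k-tuple); multisets are its permutation classes, and all the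
   notions below are permutation invariant. *)

(* d_k(A,B): minimum over perfect matchings (= permutations s of 'I_k) of the
   sum of matched distances. The fold starts at the identity matching, which
   is itself one of the candidates, so this is exactly the minimum. *)
Definition dk (R : realDomainType) (X : Type) (d : X -> X -> R) (k : nat)
    (A B : 'I_k -> X) : R :=
  \big[Num.min/(\sum_(i < k) d (A i) (B i))]_(s : 'S_k)
     \sum_(i < k) d (A i) (B (s i)).

(* cost of a k-RP solution K for distribution P on a finite X:
   E_{L ~ P_k} [ d_k(K, L) ], with P_k the law of k i.i.d. draws from P. *)
Definition rp_cost (R : realDomainType) (X : finType) (d : X -> X -> R)
    (P : X -> R) (k : nat) (K : 'I_k -> X) : R :=
  \sum_(L : {ffun 'I_k -> X}) (\prod_(i < k) P (L i)) * dk d K L.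

(* The point set U ∪ S: element points inl u (u ∈ [N] = 'I_N), set points
   inr i (for the set S i, i < m). *)
Definition rp_dist (R : realDomainType) (N m : nat) (S : 'I_m -> {set 'I_N})
    (eps : R) (x y : 'I_N + 'I_m) : R :=
  match x, y with
  | inl u1, inl u2 => if u1 == u2 then 0 else 2
  | inr i, inr j => if i == j then 0 else 1
  | inl u, inr i => if u \in S i then 1 else 2 - eps
  | inr i, inl u => if u \in S i then 1 else 2 - eps
  end.

Definition rp_P (R : realDomainType) (N m : nat) (x : 'I_N + 'I_m) : R :=
  match x with
  | inl _ => (N%:R)^-1
  | inr _ => 0
  end.

(** The solution is the covering itself: K = (S_1, ..., S_l).  Match a random
    draw L = (x_1, ..., x_l) against K by sending each drawn element u to a
    covering set containing it (at distance 1) and each drawn set point to an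
    arbitrary position (at distance at most 1); every covering set that receives
    no draw is matched to a leftover point at distance at most 2.  Hence
    d_l(K, L) <= l + #{sets missed by L}.  Assign every element to one covering
    set containing it; the other l - 1 sets own at most (l - 1) N / l elements,
    so a fixed covering set is missed by all l independent draws with
    probability at most (1 - 1/l)^l <= 1/e. *)

From mathcomp Require Import all_boot all_order all_algebra all_fingroup.
From mathcomp Require Import reals sequences exp.
From mathcomp Require Import ring.
Set Implicit Arguments. Unset Strict Implicit. Unset Printing Implicit Defensive.
Import Order.TTheory GRing.Theory Num.Theory.
Local Open Scope ring_scope.

Lemma perm_section (T : finType) (f : T -> T) (A : {set T}) :
  {subset A <= codom f} -> exists s : {perm T}, {in A, cancel s f}.
Proof.
have [n] := ubnP #|A|; elim: n A => // n IH A; rewrite ltnS => leA sub.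
have [->|[a aA]] := set_0Vmem A; first by exists 1%g => i; rewrite inE.
have [||s' s'K] := IH (A :\ a).
- by apply: leq_trans leA; rewrite (cardsD1 a A) aA.
- by move=> x /setD1P [_ /sub].
have /codomP [j fj] := sub a aA.
exists (tperm a ((s'^-1)%g j) * s')%g => i iA; rewrite permM.
have [->|ia] := eqVneq i a; first by rewrite tpermL permKV fj.
have iA' : i \in A :\ a by rewrite in_setD1 ia iA.
have ij : i != (s'^-1)%g j.
  by apply: contra ia => /eqP ij; rewrite -(s'K i iA') ij permKV fj.
by rewrite tpermD 1?eq_sym // s'K.
Qed.

Lemma dk_le_perm (R : realDomainType) (X : Type) (d : X -> X -> R) (k : nat)
    (A B : 'I_k -> X) (s : 'S_k) :
  dk d A B <= \sum_(i < k) d (A i) (B (s i)).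
Proof. by rewrite /dk (bigD1 s) //= ge_min lexx. Qed.

Lemma sum_rp_P_le1 (R : realFieldType) (N m : nat) :
  \sum_(x : 'I_N + 'I_m) @rp_P R N m x <= 1.
Proof.
rewrite big_sumType /= big1_eq addr0 sumr_const card_ord.
have [->|N_gt0] := posnP N; first by rewrite mulr0n ler01.
by rewrite -[X in X <= _]mulr_natl mulfV // pnatr_eq0 -lt0n.
Qed.

Lemma one_subV_expn_le_expRN1 (R : realType) (n : nat) :
  (0 < n)%N -> (1 - n%:R^-1) ^+ n <= (expR 1)^-1 :> R.
Proof.
move=> n_gt0; have n_neq0 : n%:R != 0 :> R by rewrite pnatr_eq0 -lt0n.
have n1 : 0 <= 1 - n%:R^-1 :> R by rewrite subr_ge0 invf_le1 ?ltr0n // ler1n.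
apply: (@le_trans _ _ (expR (- n%:R^-1) ^+ n)).
  by apply: lerXn2r; rewrite ?nnegrE ?expR_ge0 // expR_ge1Dx.
by rewrite -expRM_natl mulrN mulfV // expRN.
Qed.

Lemma card_div_ratio_le (R : realFieldType) (N n : nat) :
  (0 < n)%N -> (n %| N)%N ->
  N%:R^-1 * (n.-1 * (N %/ n))%:R <= 1 - n%:R^-1 :> R.
Proof.
move=> n_gt0 nN; have [->|N_gt0] := posnP N.
  by rewrite invr0 mul0r subr_ge0 invf_le1 ?ltr0n // ler1n.
have n_neq0 : n%:R != 0 :> R by rewrite pnatr_eq0 -lt0n.
have q_neq0 : (N %/ n)%:R != 0 :> R by rewrite pnatr_eq0 -lt0n divn_gt0 // dvdn_leq.
suff -> : N%:R^-1 * (n.-1 * (N %/ n))%:R = 1 - n%:R^-1 :> R by [].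
rewrite -{1}(divnK nN) -subn1 !natrM natrB //; field; by rewrite n_neq0 q_neq0.
Qed.

Section CoveringSolution.

Variables (R : realType) (N m n : nat) (S : 'I_m -> {set 'I_N}) (eps : R).
Variables (cover : 'I_n -> 'I_m) (owner : 'I_N -> 'I_n).
Hypotheses (n_gt0 : (0 < n)%N) (n_dvdN : (n %| N)%N).
Hypothesis card_S : forall i, #|S i| = (N %/ n)%N.
Hypothesis eps_gt0 : 0 < eps.
Hypothesis owner_mem : forall u, u \in S (cover (owner u)).

Local Notation X := ('I_N + 'I_m)%type.
Local Notation d := (rp_dist S eps).
Local Notation P := (@rp_P R N m).

Definition cover_sol (i : 'I_n) : X := inr (cover i).

Definition target (j : 'I_n) (x : X) : 'I_n :=
  if x is inl u then owner u else j.

(* A product of indicators, so that its expectation factorises over the draws. *)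
Definition missed (L : 'I_n -> X) (i : 'I_n) : R :=
  \prod_(j < n) (target j (L j) != i)%:R.

Lemma dist_cover_sol_le2 i x : d (cover_sol i) x <= 2.
Proof.
case: x => [u|k] /=; first by case: ifP => _; rewrite ?ler1n // gerBl ltW.
by case: ifP => _; rewrite ?ler0n ?ler1n.
Qed.

Lemma dist_cover_sol_target j x : d (cover_sol (target j x)) x <= 1.
Proof. by case: x => [u|k] /=; [rewrite owner_mem | case: ifP; rewrite ?ler01]. Qed.

Lemma dk_cover_sol_le L : dk d cover_sol L <= \sum_(i < n) (1 + missed L i).
Proof.
pose f j := target j (L j).
have [s sK] : exists s : 'S_n, {in [set i in codom f], cancel s f}.
  by apply: perm_section => i; rewrite inE.
apply: le_trans (dk_le_perm _ _ _ s) _; apply: ler_sum => i _.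
have [fi|nfi] := boolP (i \in codom f).
  have missed_ge0 : 0 <= missed L i by apply: prodr_ge0 => j _; rewrite ler0n.
  rewrite -{1}(sK i) ?inE //; apply: le_trans (dist_cover_sol_target _ _) _.
  by rewrite lerDl.
rewrite /missed big1 => [|j _]; first exact: dist_cover_sol_le2.
by have /negPf-> : f j != i by apply: contra nfi => /eqP <-; exact: codom_f.
Qed.

Lemma card_missed_le i : (#|[set u | owner u != i]| <= n.-1 * (N %/ n))%N.
Proof.
rewrite -sum1_card (partition_big owner (predC1 i)) => [|u]; last by rewrite inE.
apply: (@leq_trans (\sum_(k | k != i) N %/ n)); last first.
  by rewrite sum_nat_const cardC1 card_ord.
apply: leq_sum => k _; rewrite sum1_card -(card_S (cover k)).
by apply/subset_leq_card/subsetP => u /andP [_ /eqP <-].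
Qed.

Lemma sum_P_target j i :
  \sum_x P x * (target j x != i)%:R = N%:R^-1 * #|[set u | owner u != i]|%:R.
Proof.
rewrite big_sumType /= [X in _ + X]big1 ?addr0 => [|k _]; last by rewrite mul0r.
rewrite -sum1_card natr_sum mulr_sumr [RHS]big_mkcond /=.
by apply: eq_bigr => u _; rewrite inE; case: (owner u != i); rewrite ?mulr1 ?mulr0.
Qed.

Lemma expected_missed_le i :
  \sum_(L : {ffun 'I_n -> X}) (\prod_(j < n) P (L j)) * missed L i
    <= (expR 1)^-1.
Proof.
under eq_bigr => L _ do rewrite -big_split /=.
rewrite -(bigA_distr_bigA (fun j x => P x * (target j x != i)%:R)) /=.
under eq_bigr => j _ do rewrite sum_P_target.
rewrite prodr_const card_ord; apply: le_trans (one_subV_expn_le_expRN1 _ n_gt0).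
apply: lerXn2r; rewrite ?nnegrE ?mulr_ge0 ?invr_ge0 ?ler0n //.
  by rewrite subr_ge0 invf_le1 ?ltr0n // ler1n.
apply: le_trans (card_div_ratio_le _ n_gt0 n_dvdN).
by rewrite ler_wpM2l ?invr_ge0 ?ler0n // ler_nat card_missed_le.
Qed.

Lemma rp_cost_cover_sol : rp_cost d P cover_sol <= n%:R * (1 + (expR 1)^-1).
Proof.
have weight_ge0 (L : 'I_n -> X) : 0 <= \prod_(j < n) P (L j).
  by apply: prodr_ge0 => j _; case: (L j) => /=; rewrite ?invr_ge0 ?ler0n.
apply: (@le_trans _ _ (\sum_(L : {ffun 'I_n -> X})
    (\prod_(j < n) P (L j)) * \sum_(i < n) (1 + missed L i))).
  by apply: ler_sum => L _; rewrite ler_wpM2l ?dk_cover_sol_le.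
under eq_bigr => L _ do rewrite big_split /= sumr_const card_ord mulrDr mulr_sumr.
rewrite big_split /= exchange_big /= mulrDr; apply: lerD.
  rewrite -mulr_suml mulr1 mulrC -(bigA_distr_bigA (fun _ x => P x)) prodr_const.
  rewrite ler_piMr ?ler0n // card_ord exprn_ile1 ?sum_rp_P_le1 ?sumr_ge0 //.
  by move=> x _; case: x => /=; rewrite ?invr_ge0 ?ler0n.
rewrite mulr_natl -[n in _ *+ n]card_ord -sumr_const ler_sum // => i _.
exact: expected_missed_le.
Qed.

End CoveringSolution.

Theorem lemma3 (R : realType) (N l m : nat) (S : 'I_m -> {set 'I_N}) (eps : R) :
  (0 < l)%N -> (l %| N)%N ->
  (forall i : 'I_m, #|S i| = (N %/ l)%N) ->
  0 < eps ->
  (exists I : {set 'I_m}, #|I| = l /\ \bigcup_(i in I) S i = [set: 'I_N]) ->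
  exists K : 'I_l -> ('I_N + 'I_m)%type,
    rp_cost (rp_dist S eps) (@rp_P R N m) K <= l%:R * (1 + (expR 1)^-1).
Proof.
move=> l_gt0 l_dvdN card_S eps_gt0 [I [card_I cover_I]]; subst l.
have owner_ex u : exists i : 'I_#|I|, u \in S (enum_val i).
  have : u \in \bigcup_(k in I) S k by rewrite cover_I inE.
  by case/bigcupP => k kI uk; exists (enum_rank_in kI k); rewrite enum_rankK_in.
exists (cover_sol N (fun i : 'I_#|I| => enum_val i)).
apply: (rp_cost_cover_sol (owner := fun u => xchoose (owner_ex u))) => // u.
exact: xchooseP (owner_ex u).
Qed.
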